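(* Let $q>0$. The set $L(q)$ contains a loop of length $1$ if and only if $q=1/b$ for some positive integer $b$. In that case the weight $w_q$ is not unique unless $q=1$.
   Context: For $q>0$, $k\ge0$ and $\mathbf m=(m_0,\dots,m_k)\in\mathbb Z^{k+1}$ put $\mathbf m_j=(m_0,\dots,m_j)$; define $c(q,\mathbf m_0)=m_0$ and $c(q,\mathbf m_j)=m_j+\frac{1}{q\,c(q,\mathbf m_{j-1})}$ for $1\le j\le k$. $\mathbf m$ is a path for $q$ of length $k$ if $c(q,\mathbf m_j)\ne0$ for $0\le j\le k-1$. The weight is $w_q(\mathbf m)=q^{k/2}\prod_{j=0}^{k-1}|c(q,\mathbf m_j)|$ (and $1$ if $k=0$). A loop is a path with $c(q,\mathbf m)=0$; $L(q)$ is the set of loops for $q$. The weight $w_q$ is unique if $w_q(\mathbf m)=w_q(\mathbf n)$ for all paths $\mathbf m,\mathbf n$ for $q$ with $c(q,\mathbf m)=c(q,\mathbf n)$. *)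

From Stdlib Require Import Reals ZArith List.
Import ListNotations.
Open Scope R_scope.

(* A vector m = (m_0, ..., m_k) in Z^{k+1} is represented as a head m0 : Z
   and a tail ms = [m_1; ...; m_k] : list Z, so k = length ms.
   The prefix m_j = (m_0,...,m_j) is (m0, firstn j ms). *)

Definition cq (q : R) (m0 : Z) (ms : list Z) : R :=
  fold_left (fun acc x => IZR x + / (q * acc)) ms (IZR m0).

Definition is_path (q : R) (m0 : Z) (ms : list Z) : Prop :=
  forall j : nat, (j < length ms)%nat -> cq q m0 (firstn j ms) <> 0.

Definition weight (q : R) (m0 : Z) (ms : list Z) : R :=
  sqrt q ^ length ms *
  fold_right Rmult 1
    (map (fun j => Rabs (cq q m0 (firstn j ms))) (seq 0 (length ms))).

Definition is_loop (q : R) (m0 : Z) (ms : list Z) : Prop :=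
  is_path q m0 ms /\ cq q m0 ms = 0.

Definition weight_unique (q : R) : Prop :=
  forall (m0 : Z) (ms : list Z) (n0 : Z) (ns : list Z),
    is_path q m0 ms -> is_path q n0 ns -> cq q m0 ms = cq q n0 ns ->
    weight q m0 ms = weight q n0 ns.

(** A length-one loop (m0, m1) means m1 + 1/(q m0) = 0, i.e. 1/q = -m0 m1 is
    an integer, which is positive since q is; conversely (b, -1) is a loop for
    q = 1/b.  When 1/q = b is an integer, the length-zero path (b) and the
    length-one path (1, 0) both end at c = b, with weights 1 and sqrt q, so
    the weight is not unique unless q = 1. *)

From Stdlib Require Import Reals ZArith List Lra Lia.
Import ListNotations.
Open Scope R_scope.

Lemma cq_nil (q : R) (m0 : Z) : cq q m0 [] = IZR m0.
Proof. reflexivity. Qed.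

Lemma cq_single (q : R) (m0 m1 : Z) : cq q m0 [m1] = IZR m1 + / (q * IZR m0).
Proof. reflexivity. Qed.

Lemma is_path_nil (q : R) (m0 : Z) : is_path q m0 [].
Proof. intros j Hj; simpl in Hj; lia. Qed.

Lemma is_path_single (q : R) (m0 m1 : Z) : is_path q m0 [m1] <-> (m0 <> 0)%Z.
Proof.
  split.
  - intros Hp Hm0; apply (Hp 0%nat); [simpl; lia|].
    rewrite Hm0; reflexivity.
  - intros Hm0 j Hj; simpl in Hj.
    replace j with 0%nat by lia.
    apply not_0_IZR; exact Hm0.
Qed.

Lemma weight_nil (q : R) (m0 : Z) : weight q m0 [] = 1.
Proof. unfold weight; simpl; ring. Qed.

Lemma weight_single (q : R) (m0 m1 : Z) :
  weight q m0 [m1] = sqrt q * Rabs (IZR m0).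
Proof. unfold weight; simpl; rewrite cq_nil; ring. Qed.

Lemma is_loop_single (q : R) (m0 m1 : Z) : q <> 0 ->
  is_loop q m0 [m1] <-> (m0 <> 0)%Z /\ q * IZR (m0 * m1) = -1.
Proof.
  intros Hq; unfold is_loop; rewrite is_path_single, cq_single, mult_IZR.
  split; intros [Hm0 Hc]; split; try exact Hm0;
    apply not_0_IZR in Hm0.
  - replace (IZR m1) with (- / (q * IZR m0)) by lra.
    field; split; assumption.
  - replace (IZR m1) with (-1 / (q * IZR m0)).
    + field; split; assumption.
    + rewrite <- Hc; field; split; assumption.
Qed.

Lemma loop_single_inv_pos_integer (q : R) (m0 m1 : Z) : 0 < q ->
  is_loop q m0 [m1] -> (0 < - (m0 * m1))%Z /\ q = / IZR (- (m0 * m1)).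
Proof.
  intros Hq Hloop.
  apply is_loop_single in Hloop as [_ Hc]; [|lra].
  assert (Hb : q * IZR (- (m0 * m1)) = 1) by (rewrite opp_IZR; lra).
  split.
  - apply lt_IZR; nra.
  - assert (Hb0 : IZR (- (m0 * m1)) <> 0) by nra.
    apply (Rmult_eq_reg_r (IZR (- (m0 * m1)))); [|exact Hb0].
    rewrite Hb, Rinv_l; [reflexivity|exact Hb0].
Qed.

Lemma loop_single_inv_integer (b : Z) : (b <> 0)%Z -> is_loop (/ IZR b) b [(-1)%Z].
Proof.
  intros Hb; apply not_0_IZR in Hb.
  apply is_loop_single; [now apply Rinv_neq_0_compat|].
  split; [now intros ->|].
  rewrite mult_IZR; field; exact Hb.
Qed.

Lemma weight_not_unique_inv_integer (q : R) (b : Z) :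
  0 < q -> q <> 1 -> q = / IZR b -> ~ weight_unique q.
Proof.
  intros Hq Hq1 Hqb Hu.
  assert (Hb : IZR b <> 0) by (intros Hb; rewrite Hb, Rinv_0 in Hqb; lra).
  assert (Hw : weight q 1 [0%Z] = weight q b []).
  { apply Hu.
    - apply is_path_single; lia.
    - apply is_path_nil.
    - rewrite cq_single, cq_nil, Hqb; field; exact Hb. }
  rewrite weight_single, weight_nil, Rabs_R1, Rmult_1_r in Hw.
  apply Hq1; rewrite <- (sqrt_sqrt q), Hw by lra; ring.
Qed.

Theorem corollary4 (q : R) (hq : 0 < q) :
  ((exists m0 m1 : Z, is_loop q m0 [m1]) <->
     (exists b : Z, (0 < b)%Z /\ q = / IZR b)) /\
  (forall b : Z, (0 < b)%Z -> q = / IZR b -> q <> 1 -> ~ weight_unique q).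
Proof.
  split; [split|].
  - intros [m0 [m1 Hloop]].
    exists (- (m0 * m1))%Z.
    exact (loop_single_inv_pos_integer q m0 m1 hq Hloop).
  - intros [b [Hb ->]].
    exists b, (-1)%Z.
    apply loop_single_inv_integer; lia.
  - intros b _ Hqb Hq1.
    exact (weight_not_unique_inv_integer q b hq Hq1 Hqb).
Qed.
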